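(* Let $V,W$ be $d$-dimensional real vector spaces, $1\le k\le d-1$, and $A,B\in\operatorname{Hom}(V,W)$ with $\bigwedge^kA=\bigwedge^kB$ and $\operatorname{rank}A>k$. Then $A=\pm B$. If $k$ is odd, then $A=B$.
   Context: $\bigwedge^kA:\bigwedge^kV\to\bigwedge^kW$ is defined by $v_1\wedge\dots\wedge v_k\mapsto Av_1\wedge\dots\wedge Av_k$. *)

From HB Require Import structures.
From mathcomp Require Import all_boot all_order all_algebra.
Set Implicit Arguments. Unset Strict Implicit. Unset Printing Implicit Defensive.
Import Order.TTheory GRing.Theory Num.Theory.
Local Open Scope ring_scope.

(* Strictly increasing k-tuples of indices in 'I_d, i.e. k-element subsets
   I = {i_1 < ... < i_k} of {0,..,d-1}; they index the standard basis
   e_{i_1} /\ ... /\ e_{i_k} of the k-th exterior power of R^d. *)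
Definition incr (d k : nat) (f : {ffun 'I_k -> 'I_d}) : bool :=
  [forall i : 'I_k, forall j : 'I_k, (i < j)%N ==> (f i < f j)%N].

Definition ksub (d k : nat) := {f : {ffun 'I_k -> 'I_d} | incr f}.

Definition minor (R : comRingType) (d k : nat) (A : 'M[R]_d)
  (f g : {ffun 'I_k -> 'I_d}) : R :=
  \det (\matrix_(i < k, j < k) A (f i) (g j)).

(* The k-th exterior power /\^k A, given by its matrix in the standard
   bases {e_I} of /\^k R^d: the coefficient of e_I in
   /\^k A (e_J) = A e_{j_1} /\ ... /\ A e_{j_k} is the (I,J)-minor of A
   (k-th compound matrix). *)
Definition ext_pow (R : comRingType) (d k : nat) (A : 'M[R]_d)
  : {ffun ksub d k * ksub d k -> R} :=
  [ffun IJ => minor A (val IJ.1) (val IJ.2)].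

From HB Require Import structures.
From mathcomp Require Import all_boot all_order all_algebra perm.
Import Order.TTheory GRing.Theory Num.Theory.
Local Open Scope ring_scope.
Set Implicit Arguments. Unset Strict Implicit. Unset Printing Implicit Defensive.

(* Equal k-th compound matrices means equal k-minors, hence equal adjugates
   of corresponding (k+1)-submatrices of A and B.  As rank A > k, some
   (k+1)-submatrix X of A is invertible, and adj X = adj Y forces Y = c X with
   c^k = 1.  Moving one row and one column of X to arbitrary positions keeps a
   nonzero cofactor of X, and the adjugate identity propagates the relation
   to every entry, so B = c A.  Over an ordered field c = 1 or -1, and c = 1
   when k is odd. *)

Lemma incr_perm_factor d k (f : 'I_k -> 'I_d) : injective f ->
  exists (h : {ffun 'I_k -> 'I_d}) (s : 'S_k), incr h /\ f =1 h \o s.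
Proof.
move=> f_inj; pose e := enum [set f i | i : 'I_k].
have size_e : size e = k by rewrite -cardE card_imset // card_ord.
have f_in_e i : f i \in e by rewrite mem_enum imset_f.
have lt_trans : transitive (fun x y : 'I_d => (x < y)%N).
  by move=> y x z; apply: ltn_trans.
have e_sorted : sorted (fun x y : 'I_d => (x < y)%N) e.
  rewrite /e /enum_mem; apply: sorted_filter => //.
  by have := iota_ltn_sorted 0 d; rewrite -val_enum_ord sorted_map enumT.
have idx_lt i : (index (f i) e < k)%N by rewrite -size_e index_mem.
pose s i := Ordinal (idx_lt i).
have s_inj : injective s.
  move=> i j /(congr1 val) /= eq_ij; apply: f_inj.
  by rewrite -(nth_index (f i) (f_in_e i)) eq_ij nth_index.
exists [ffun i : 'I_k => nth (f i) e i], (perm s_inj); split; last first.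
  by move=> i; rewrite /= ffunE permE /= nth_index.
apply/forallP => i; apply/forallP => j; apply/implyP => lt_ij; rewrite !ffunE.
rewrite (set_nth_default (f j)) ?size_e //.
by apply: (sorted_ltn_nth lt_trans (f j) e_sorted); rewrite // inE size_e.
Qed.

Lemma det_mxsub_eq0 (R : comNzRingType) m n k (A : 'M[R]_(m, n))
    (f : 'I_k -> 'I_m) (g : 'I_k -> 'I_n) :
  ~~ (injectiveb f && injectiveb g) -> \det (mxsub f g A) = 0.
Proof.
rewrite negb_and.
case/orP=> [/injectivePn[x [y neq_xy fxy]] | /injectivePn[x [y neq_xy gxy]]].
  by apply: (determinant_alternate neq_xy) => j; rewrite !mxE fxy.
rewrite -det_tr; apply: (determinant_alternate neq_xy) => j.
by rewrite !mxE gxy.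
Qed.

Lemma det_mxsub_perm (R : comNzRingType) m n k (A : 'M[R]_(m, n))
    (f : 'I_k -> 'I_m) (g : 'I_k -> 'I_n) (s t : 'S_k) :
  \det (mxsub (f \o s) (g \o t) A) = (-1) ^+ s * (-1) ^+ t * \det (mxsub f g A).
Proof.
have -> : mxsub (f \o s) (g \o t) A = row_perm s (col_perm t (mxsub f g A)).
  by apply/matrixP => i j; rewrite !mxE.
by rewrite row_permE col_permE !det_mulmx !det_perm odd_permV mulrA mulrAC.
Qed.

Lemma ext_pow_eq_minors (R : comNzRingType) d k (A B : 'M[R]_d) :
  ext_pow k A = ext_pow k B ->
  forall f g : 'I_k -> 'I_d, \det (mxsub f g A) = \det (mxsub f g B).
Proof.
move=> extAB f g.
have [/andP[/injectiveP f_inj /injectiveP g_inj] | noninj] :=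
  boolP (injectiveb f && injectiveb g); last by rewrite !det_mxsub_eq0.
have [h [s [h_incr f_hs]]] := incr_perm_factor f_inj.
have [h' [t [h'_incr g_h't]]] := incr_perm_factor g_inj.
rewrite !(eq_mxsub _ _ f_hs g_h't) !det_mxsub_perm; congr (_ * _).
have := congr1 (fun F : {ffun ksub d k * ksub d k -> R} =>
  F (exist _ h h_incr, exist _ h' h'_incr)) extAB.
by rewrite /= !ffunE.
Qed.

Lemma cofactor_mxsub (R : comNzRingType) m n k (A : 'M[R]_(m, n))
    (f : 'I_k.+1 -> 'I_m) (g : 'I_k.+1 -> 'I_n) i j :
  cofactor (mxsub f g A) i j =
  (-1) ^+ (i + j) * \det (mxsub (f \o lift i) (g \o lift j) A).
Proof. by rewrite /cofactor row'Esub col'Esub -!mxsub_comp. Qed.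

Lemma eq_cofactor_mxsub (R : comNzRingType) m n k (A : 'M[R]_(m, n))
    (f f' : 'I_k.+1 -> 'I_m) (g g' : 'I_k.+1 -> 'I_n) i j :
  f \o lift i =1 f' \o lift i -> g \o lift j =1 g' \o lift j ->
  cofactor (mxsub f g A) i j = cofactor (mxsub f' g' A) i j.
Proof. by move=> eq_f eq_g; rewrite !cofactor_mxsub (eq_mxsub _ _ eq_f eq_g). Qed.

Lemma eta_with_lift n (T : eqType) (h : 'I_n.+1 -> T) p x :
  [eta h with p |-> x] \o lift p =1 h \o lift p.
Proof. by move=> y; rewrite /= eq_sym (negPf (neq_lift p y)). Qed.

Lemma adj_mxsub_eq (R : comNzRingType) m n k (A B : 'M[R]_(m, n)) :
  (forall (f : 'I_k -> 'I_m) (g : 'I_k -> 'I_n),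
     \det (mxsub f g A) = \det (mxsub f g B)) ->
  forall (f : 'I_k.+1 -> 'I_m) (g : 'I_k.+1 -> 'I_n),
    \adj (mxsub f g A) = \adj (mxsub f g B).
Proof.
move=> minorsAB f g; apply/matrixP => i j.
by rewrite !mxE !cofactor_mxsub minorsAB.
Qed.

Lemma adj_neq0 (R : fieldType) n (X : 'M[R]_n.+1) : X \in unitmx -> \adj X != 0.
Proof.
rewrite unitmxE unitfE; apply: contraNneq => adjX0.
have /matrixP/(_ 0 0) := mul_adj_mx X.
by rewrite adjX0 mul0mx !mxE eqxx mulr1n => <-.
Qed.

Lemma adj_eq_scale (R : fieldType) n (X Y : 'M[R]_n.+1) :
  \adj X = \adj Y -> X \in unitmx -> exists2 c : R, c ^+ n = 1 & Y = c *: X.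
Proof.
move=> adjXY unitX; have detX_neq0 : \det X != 0 by rewrite -unitfE -unitmxE.
pose c := \det Y / \det X.
have YcX : Y = c *: X.
  apply: (scalerI detX_neq0); rewrite scalerA mulrC divfK //.
  rewrite -mul_mx_scalar -mul_scalar_mx -(mul_adj_mx X) -(mul_mx_adj Y).
  by rewrite adjXY mulmxA.
exists c => //; apply/eqP; rewrite -subr_eq0.
have : (c ^+ n - 1) *: \adj X == 0.
  by rewrite scalerBl scale1r {2}adjXY YcX adjZ subrr.
by rewrite scaler_eq0 (negPf (adj_neq0 unitX)) orbF.
Qed.

(* [Y - c X] is supported on row [p], so [adj X *m (Y - c X)], which is the
   scalar matrix [det Y - c det X], is the outer product of column [p] of
   [adj X] with that row; a scalar matrix of rank <= 1 and size >= 2 is 0. *)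
Lemma adj_eq_scale_row (R : fieldType) n (X Y : 'M[R]_n.+2) (c : R) p q :
  \adj X = \adj Y -> cofactor X p q != 0 ->
  (forall r, r != p -> forall s, Y r s = c * X r s) -> Y = c *: X.
Proof.
move=> adjXY cofX Y_rows.
have adjXD : \adj X *m (Y - c *: X) = (\det Y - c * \det X)%:M.
  rewrite mulmxBr -scalemxAr mul_adj_mx adjXY mul_adj_mx.
  by rewrite scale_scalar_mx raddfB.
have row_p a b :
    cofactor X p a * (Y p b - c * X p b) = (\det Y - c * \det X) *+ (a == b).
  have /matrixP/(_ a b) := adjXD; rewrite !mxE (bigD1 p) //= big1 ?addr0.
    by move=> <-; rewrite !mxE.
  by move=> r /Y_rows YX; rewrite !mxE YX subrr mulr0.
have Y_row_p s : (\det Y - c * \det X) *+ (q == s) = 0 -> Y p s = c * X p s.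
  by rewrite -row_p => /eqP; rewrite mulf_eq0 (negPf cofX) subr_eq0 => /eqP.
pose b := lift q ord0.
have Y_pb : Y p b = c * X p b by rewrite Y_row_p // (negPf (neq_lift q _)).
have detYX : \det Y - c * \det X = 0.
  by have := row_p b b; rewrite eqxx mulr1n Y_pb subrr mulr0 => <-.
apply/matrixP => r s; rewrite mxE.
by have [-> | /Y_rows //] := eqVneq r p; rewrite Y_row_p // detYX mul0rn.
Qed.

Lemma adj_eq_scale_col (R : fieldType) n (X Y : 'M[R]_n.+2) (c : R) p q :
  \adj X = \adj Y -> cofactor X p q != 0 ->
  (forall s, s != q -> forall r, Y r s = c * X r s) -> Y = c *: X.
Proof.
move=> adjXY cofX Y_cols; apply: trmx_inj; rewrite linearZ /=.
apply: (@adj_eq_scale_row _ _ _ _ _ q p); first by rewrite -!trmx_adj adjXY.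
  by rewrite cofactor_tr.
by move=> s /Y_cols YX r; rewrite !mxE.
Qed.

Lemma exists_unit_mxsub (R : fieldType) m n r (A : 'M[R]_(m, n)) :
  (r <= \rank A)%N ->
  exists (f : 'I_r -> 'I_m) (g : 'I_r -> 'I_n), mxsub f g A \in unitmx.
Proof.
move=> le_rA; pose f := maxrankfun A \o widen_ord le_rA.
have f_free : row_free (rowsub f A).
  rewrite -row_leq_rank rowsub_comp rowsubE -pid_mxErow.
  by rewrite mxrankMfree ?maxrowsub_free // rank_pid_mx.
have fT_full : row_full (rowsub f A)^T by rewrite /row_full mxrank_tr.
exists f, (fullrankfun fT_full); rewrite -unitmx_tr.
suff -> : (mxsub f (fullrankfun fT_full) A)^T =
          rowsub (fullrankfun fT_full) (rowsub f A)^T.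
  exact: fullrowsub_unit.
by apply/matrixP => i j; rewrite !mxE.
Qed.

Lemma exprn_eq1_pm1 (R : realDomainType) (c : R) n : (0 < n)%N -> c ^+ n = 1 ->
  (c = 1 \/ c = -1) /\ (odd n -> c = 1).
Proof.
move=> n_gt0 cn1; split=> [|odd_n].
  have /eqP : `|c| ^+ n = 1 by rewrite -normrX cn1 normr1.
  by rewrite pexpr_eq1 // eqr_norml ler01 andbT; case/orP=> /eqP; [left | right].
have c_ge0 : 0 <= c by rewrite -(exprn_odd_ge0 _ odd_n) cn1 ler01.
by apply/eqP; rewrite -(pexpr_eq1 n_gt0 c_ge0) cn1.
Qed.

Section ScaleFromSubmatrix.
Variables (R : fieldType) (m n k : nat) (A B : 'M[R]_(m, n)).
Hypothesis adjAB : forall (f : 'I_k.+2 -> 'I_m) (g : 'I_k.+2 -> 'I_n),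
  \adj (mxsub f g A) = \adj (mxsub f g B).
Variables (f : 'I_k.+2 -> 'I_m) (g : 'I_k.+2 -> 'I_n) (p q : 'I_k.+2) (c : R).
Hypothesis cofA_pq : cofactor (mxsub f g A) p q != 0.
Hypothesis BcA_sub : mxsub f g B = c *: mxsub f g A.

Lemma mxsub_col_scale i s : B i (g s) = c * A i (g s).
Proof.
pose f' := [eta f with p |-> i].
have BcA' : mxsub f' g B = c *: mxsub f' g A.
  apply: (adj_eq_scale_row (adjAB f' g) (p := p) (q := q)).
    by rewrite (eq_cofactor_mxsub _ (eta_with_lift f p i) (frefl _)).
  move=> r /negPf r_neq_p t; rewrite !mxE /= r_neq_p.
  by have /matrixP/(_ r t) := BcA_sub; rewrite !mxE.
by have /matrixP/(_ p s) := BcA'; rewrite !mxE /= eqxx.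
Qed.

Lemma mxsub_scale : B = c *: A.
Proof.
apply/matrixP => i j; rewrite mxE.
pose f' := [eta f with p |-> i]; pose g' := [eta g with q |-> j].
have BcA' : mxsub f' g' B = c *: mxsub f' g' A.
  apply: (adj_eq_scale_col (adjAB f' g') (p := p) (q := q)).
    by rewrite (eq_cofactor_mxsub _ (eta_with_lift f p i) (eta_with_lift g q j)).
  by move=> s /negPf s_neq_q r; rewrite !mxE /= s_neq_q mxsub_col_scale.
by have /matrixP/(_ p q) := BcA'; rewrite !mxE /= !eqxx.
Qed.

End ScaleFromSubmatrix.

Theorem mainTheorem12 (R : realFieldType) (d k : nat) (A B : 'M[R]_d) :
  (1 <= k)%N -> (k <= d - 1)%N ->
  ext_pow k A = ext_pow k B ->
  (k < \rank A)%N ->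
  (A = B \/ A = - B) /\ (odd k -> A = B).
Proof.
(* [k <= d - 1] is implied by [k < rank A]. *)
move=> k_gt0 _ /ext_pow_eq_minors minorsAB.
case: k k_gt0 minorsAB => // k _ minorsAB rkA.
have adjAB := adj_mxsub_eq minorsAB.
have [f [g unitX]] := exists_unit_mxsub rkA.
have [c ck1 BcA_sub] := adj_eq_scale (adjAB f g) unitX.
have /matrix0Pn[q [p cof_pq]] := adj_neq0 unitX; rewrite mxE in cof_pq.
rewrite (mxsub_scale adjAB cof_pq BcA_sub).
have [c_pm1 c1_of_odd] := exprn_eq1_pm1 (ltn0Sn k) ck1.
split=> [|/c1_of_odd ->]; last by rewrite scale1r.
by case: c_pm1 => ->; [left; rewrite scale1r | right; rewrite scaleN1r opprK].
Qed.
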